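(* Let $p$ be a prime and let $\pi,\rho,\tau\in\mathbb{L}_p[t]$ be monic polynomials of positive degree with $\pi=\rho\cdot\tau$. Then $\pi$ is expansive if and only if both $\rho$ and $\tau$ are expansive.
   Context: $\mathbb{L}_p=\mathbb{Z}/p\mathbb{Z}[X,X^{-1}]$ is the ring of Laurent polynomials over $\mathbb{Z}/p\mathbb{Z}$. For nonzero $\alpha\in\mathbb{L}_p$, $\deg^+(\alpha)$ (resp. $\deg^-(\alpha)$) is the largest (resp. smallest) exponent of a monomial with nonzero coefficient; $\deg^+(0)=-\infty$, $\deg^-(0)=+\infty$. A monic polynomial $\alpha_0+\alpha_1t+\dots+\alpha_{n-1}t^{n-1}+t^n\in\mathbb{L}_p[t]$ ($n\ge1$) is expansive if $\alpha_0\neq0$ and (i) $\deg^+(\alpha_0)>0$ and $\deg^+(\alpha_0)>\deg^+(\alpha_i)$ for all $i\in\{1,\dots,n-1\}$, and (ii) $\deg^-(\alpha_0)<0$ and $\deg^-(\alpha_0)<\deg^-(\alpha_i)$ for all $i\in\{1,\dots,n-1\}$. *)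

(* L_p = Z/pZ[X,X^-1] is realised as the subring of the
   fraction field {fraction {poly 'F_p}} consisting of the elements X^m * q
   (m : int, q a polynomial); L_p[t] is realised as polynomials over this
   field all of whose coefficients are Laurent polynomials. *)
From HB Require Import structures.
From mathcomp Require Import all_boot all_order all_algebra.
From mathcomp Require Import boolp.
Set Implicit Arguments. Unset Strict Implicit. Unset Printing Implicit Defensive.
From mathcomp Require Import fraction.
Import Order.TTheory GRing.Theory Num.Theory.
Local Open Scope ring_scope.

Definition LF (p : nat) := {fraction {poly 'F_p}}.

Definition lfrac (p : nat) (q : {poly 'F_p}) : LF p := @FracField.tofrac _ q.

Definition LX (p : nat) : LF p := lfrac 'X.

Definition laurent (p : nat) (a : LF p) : Prop :=
  exists (m : int) (q : {poly 'F_p}), a = LX p ^ m * lfrac q.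

Definition laurent_poly (p : nat) (P : {poly LF p}) : Prop :=
  forall i : nat, laurent P`_i.

(* normal form of a nonzero Laurent polynomial: a = X^m * q with q(0) <> 0;
   then deg^- a = m and deg^+ a = m + deg q. *)
Definition lrep_spec (p : nat) (a : LF p) (r : int * {poly 'F_p}) : Prop :=
  a = LX p ^ r.1 * lfrac r.2 /\ (r.2)`_0 != 0.

Definition lrep (p : nat) (a : LF p) : int * {poly 'F_p} :=
  match pselect (exists r, lrep_spec a r) with
  | left H => projT1 (cid H)
  | right _ => (0%R, 0%R)
  end.

(* only meaningful for nonzero Laurent polynomials; the values
   deg^+(0) = -oo, deg^-(0) = +oo are handled in [expansive] *)
Definition degm (p : nat) (a : LF p) : int := (lrep a).1.
Definition degp (p : nat) (a : LF p) : int :=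
  (lrep a).1 + ((size (lrep a).2).-1)%:Z.

(* monic P = a_0 + a_1 t + ... + t^n, n >= 1, is expansive.
   Conditions for a_i = 0 are vacuous since deg^+(0) = -oo, deg^-(0) = +oo. *)
Definition expansive (p : nat) (P : {poly LF p}) : Prop :=
  let n := (size P).-1 in
  [/\ P \is monic, (1 <= n)%N, P`_0 != 0,
      (0 < degp P`_0) /\
        (forall i : nat, (1 <= i < n)%N -> P`_i != 0 -> degp P`_i < degp P`_0)
    & (degm P`_0 < 0) /\
        (forall i : nat, (1 <= i < n)%N -> P`_i != 0 -> degm P`_0 < degm P`_i)].

From HB Require Import structures.
From mathcomp Require Import all_boot all_order all_algebra fraction boolp zify.
Import Order.TTheory GRing.Theory Num.Theory.
Local Open Scope ring_scope.
Set Implicit Arguments. Unset Strict Implicit.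

(* Both deg^+ and -deg^- behave on L_p like the degree of a non-archimedean
   absolute value: additive on products, and d (a + b) <= max (d a) (d b).
   For such a d, call the dominant index of a polynomial the last index at
   which d of its coefficients is maximal.  In the coefficient of t^(i+j) of
   R * T, where i and j are the dominant indices of R and T, the term R_i T_j
   strictly dominates every other one, so dominant indices add under
   multiplication.  A monic polynomial is expansive iff 0 is its dominant
   index for both degree functions (its leading coefficient 1 has degree 0),
   and i + j = 0 forces i = j = 0. *)

Record ultra_degree (K : idomainType) (L : K -> Prop) (d : K -> int) : Prop := {
  ud_L0 : L 0;
  ud_L1 : L 1;
  ud_LN : forall a, L a -> L (- a);
  ud_LD : forall a b, L a -> L b -> L (a + b);
  ud_LM : forall a b, L a -> L b -> L (a * b);
  ud_d1 : d 1 = 0;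
  ud_dM : forall a b, L a -> L b -> a != 0 -> b != 0 -> d (a * b) = d a + d b;
  ud_dD : forall a b, L a -> L b -> a != 0 -> b != 0 -> a + b != 0 ->
            d (a + b) <= Num.max (d a) (d b) }.

Definition dominant_index (K : idomainType) (d : K -> int) (R : {poly K}) (i : nat) :=
  [/\ R`_i != 0, forall k, R`_k != 0 -> d R`_k <= d R`_i
    & forall k, (i < k)%N -> R`_k != 0 -> d R`_k < d R`_i].

Section DominantIndex.

Variables (K : idomainType) (d : K -> int).

Lemma dominant_index_exists (R : {poly K}) : R != 0 -> exists i, dominant_index d R i.
Proof.
move=> R0; have lead : R`_(size R).-1 != 0 by rewrite -lead_coefE lead_coef_eq0.
have lt_size : ((size R).-1 < size R)%N by rewrite prednK // lt0n size_poly_eq0.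
have coef_lt_size k : R`_k != 0 -> (k < size R)%N.
  by move=> Rk; rewrite ltnNge; apply: contra Rk => /(nth_default 0) ->.
pose P (i : 'I_(size R)) := R`_i != 0.
case: (@arg_maxP _ _ _ (Ordinal lt_size) P (fun i => d R`_i) lead) => j Rj jmax.
pose Q (i : 'I_(size R)) := (R`_i != 0) && (d R`_i == d R`_j).
have Qj : Q j by rewrite /Q -/(P j) Rj eqxx.
case: (@arg_maxnP _ _ Q val Qj) => i /andP[Ri /eqP dij] imax.
exists i; split=> // [k Rk | k ik Rk]; rewrite dij.
  exact: (jmax (Ordinal (coef_lt_size k Rk))).
have := jmax (Ordinal (coef_lt_size k Rk)) Rk; rewrite /= le_eqVlt => /orP[/eqP dkj | //].
by have := imax (Ordinal (coef_lt_size k Rk)); rewrite /Q /= Rk dkj eqxx leqNgt ik => /(_ isT).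
Qed.

Lemma dominant_index_unique (R : {poly K}) i j :
  dominant_index d R i -> dominant_index d R j -> i = j.
Proof.
move=> [Ri Rimax Ristr] [Rj Rjmax Rjstr].
have [ij | ji | //] := ltngtP i j.
  by have := Ristr j ij Rj; rewrite ltNge Rjmax.
by have := Rjstr i ji Ri; rewrite ltNge Rimax.
Qed.

Lemma dominant_index0P (R : {poly K}) : dominant_index d R 0 <->
  R`_0 != 0 /\ (forall k, (0 < k)%N -> R`_k != 0 -> d R`_k < d R`_0).
Proof.
split=> [[] // | [R0 Rlt]]; split=> // -[// | k] Rk.
exact/ltW/Rlt.
Qed.

End DominantIndex.

Section UltraDegree.

Variables (K : idomainType) (L : K -> Prop) (d : K -> int).
Hypothesis hd : ultra_degree L d.

Lemma ud_dN a : L a -> a != 0 -> d (- a) = d a.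
Proof.
move=> La a0; have LN1 := ud_LN hd (ud_L1 hd).
have N1_neq0 : (-1 : K) != 0 by rewrite oppr_eq0 oner_neq0.
have dN1 : d (-1) = 0.
  have := ud_dM hd LN1 LN1 N1_neq0 N1_neq0; rewrite mulrNN mulr1 (ud_d1 hd).
  by move/esym/eqP; rewrite -mulr2n mulrn_eq0 => /eqP.
by rewrite -mulN1r (ud_dM hd LN1 La N1_neq0 a0) dN1 add0r.
Qed.

Lemma ud_dD_dominant a b : L a -> L b -> a != 0 -> (b != 0 -> d b < d a) ->
  a + b != 0 /\ d (a + b) = d a.
Proof.
move=> La Lb a0 dba; have [-> | b0] := eqVneq b 0; first by rewrite addr0.
have {}dba := dba b0.
have ab0 : a + b != 0.
  by apply: contraTneq dba => /eqP; rewrite addr_eq0 => /eqP ->; rewrite ud_dN // ltxx.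
have := ud_dD hd (ud_LD hd La Lb) (ud_LN hd Lb) ab0; rewrite oppr_eq0 addrK ud_dN //.
by move=> /(_ b0 a0); have := ud_dD hd La Lb a0 b0 ab0; split=> //; lia.
Qed.

Definition deg_below B x := L x /\ (x != 0 -> d x < B).

Lemma deg_below_sum (I : finType) (P : pred I) (F : I -> K) B :
  (forall i, P i -> deg_below B (F i)) -> deg_below B (\sum_(i | P i) F i).
Proof.
move=> hF; apply: big_ind => //; first by split; [exact: (ud_L0 hd) | rewrite eqxx].
move=> x y [Lx dx] [Ly dy]; split; first exact: (ud_LD hd).
have [-> | x0] := eqVneq x 0; first by rewrite add0r.
have [-> | y0] := eqVneq y 0; first by rewrite addr0.
by move=> xy0; have := ud_dD hd Lx Ly x0 y0 xy0; have := dx x0; have := dy y0; lia.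
Qed.

Section Product.

Variables R T : {poly K}.
Hypotheses (LR : forall i, L R`_i) (LT : forall i, L T`_i).

Lemma ud_coefM_lt k B :
  (forall i j, (i + j = k)%N -> R`_i * T`_j != 0 -> d (R`_i * T`_j) < B) ->
  (R * T)`_k != 0 -> d (R * T)`_k < B.
Proof.
move=> dB; suff: deg_below B (R * T)`_k by case.
rewrite coefM; apply: deg_below_sum => i _.
split; first exact: (ud_LM hd).
by apply: dB; rewrite subnKC // -ltnS.
Qed.

Lemma dominant_indexM i j :
  dominant_index d R i -> dominant_index d T j -> dominant_index d (R * T) (i + j).
Proof.
move=> [Ri Rmax Rstr] [Tj Tmax Tstr]; set B := d R`_i + d T`_j.
have dterm a b : R`_a * T`_b != 0 ->
    d (R`_a * T`_b) <= B /\ ((i < a)%N || (j < b)%N -> d (R`_a * T`_b) < B).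
  rewrite mulf_eq0 negb_or => /andP[Ra Tb]; rewrite (ud_dM hd) // /B.
  have dRa := Rmax a Ra; have dTb := Tmax b Tb.
  by split=> [|/orP[/Rstr/(_ Ra) | /Tstr/(_ Tb)]]; lia.
have [RTij dRTij] : (R * T)`_(i + j) != 0 /\ d (R * T)`_(i + j) = B.
  have lt_ij : (i < (i + j).+1)%N by rewrite ltnS leq_addr.
  rewrite coefM (bigD1 (Ordinal lt_ij)) //= addKn /B -(ud_dM hd) //.
  set rest := (X in _ + X).
  have [Lrest drest] : deg_below (d (R`_i * T`_j)) rest.
    apply: deg_below_sum => a neq_ai; split; first exact: (ud_LM hd).
    rewrite [X in _ < X](ud_dM hd) // => /dterm[_]; apply.
    have : nat_of_ord a != i by apply: contra neq_ai => /eqP eq_ai; apply/eqP/val_inj.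
    have := ltn_ord a; lia.
  by apply: ud_dD_dominant => //; [exact: (ud_LM hd) | rewrite mulf_neq0].
split=> // [k RTk | k ijk RTk]; rewrite dRTij.
  by rewrite -[B]addr0 -ltzD1; apply: ud_coefM_lt => // a b _ /dterm[dab _]; lia.
apply: ud_coefM_lt => // a b abk /dterm[_]; apply; lia.
Qed.

End Product.

Lemma dominant_index0M (R T : {poly K}) : (forall i, L R`_i) -> (forall i, L T`_i) ->
  R != 0 -> T != 0 ->
  dominant_index d (R * T) 0 <-> dominant_index d R 0 /\ dominant_index d T 0.
Proof.
move=> LR LT R0 T0; split=> [RT0 | [R00 T00]]; last exact: dominant_indexM R00 T00.
have [i Ri] := dominant_index_exists d R0; have [j Tj] := dominant_index_exists d T0.
have := dominant_index_unique (dominant_indexM LR LT Ri Tj) RT0.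
by move/eqP; rewrite addn_eq0 => /andP[/eqP i0 /eqP j0]; move: Ri Tj; rewrite i0 j0.
Qed.

End UltraDegree.

Lemma poly_split_Xn (R : nzRingType) (q : {poly R}) :
  q != 0 -> exists k q', q = q' * 'X^k /\ q'`_0 != 0.
Proof.
move=> q0; have [k [q' + ->]] := multiplicity_XsubC q 0.
by rewrite q0 /root horner_coef0 subr0; exists k, q'.
Qed.

Lemma coef0_neq0 (R : nzRingType) (q : {poly R}) : q`_0 != 0 -> q != 0.
Proof. by apply: contraNneq => ->; rewrite coef0. Qed.

Section Laurent.

Variable p : nat.
Implicit Types (a b : LF p) (q : {poly 'F_p}) (m : int).

Lemma lfracD q q' : lfrac (q + q') = lfrac q + lfrac q'.
Proof. exact: tofracD. Qed.

Lemma lfracM q q' : lfrac (q * q') = lfrac q * lfrac q'.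
Proof. exact: tofracM. Qed.

Lemma lfrac_eq0 q : (lfrac q == 0) = (q == 0).
Proof. exact: tofrac_eq0. Qed.

Lemma lfrac_inj : injective (@lfrac p).
Proof. by move=> q q' /eqP; rewrite tofrac_eq => /eqP. Qed.

Lemma LX_neq0 : LX p != 0.
Proof. by rewrite /LX lfrac_eq0 polyX_eq0. Qed.

Lemma LXzDn_lfrac m (k : nat) q :
  LX p ^ (m + k%:Z) * lfrac q = LX p ^ m * lfrac (q * 'X^k).
Proof. by rewrite expfzDr ?LX_neq0 // lfracM /LX /lfrac tofracXn mulrAC -mulrA. Qed.

Lemma laurent_rebase m m' q : m <= m' ->
  LX p ^ m' * lfrac q = LX p ^ m * lfrac (q * 'X^`|m' - m|%N).
Proof. by move=> le_mm'; rewrite -LXzDn_lfrac gez0_abs ?subr_ge0 // subrKC. Qed.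

Lemma lrep_spec_uniq a r r' : lrep_spec a r -> lrep_spec a r' -> r = r'.
Proof.
have uniq_le m m' q q' : m <= m' -> q`_0 != 0 ->
    LX p ^ m * lfrac q = LX p ^ m' * lfrac q' -> m = m' /\ q = q'.
  move=> le_mm' q0; rewrite (laurent_rebase q' le_mm') => /(mulfI (expfz_neq0 _ LX_neq0)).
  move=> /lfrac_inj eq_q; move: q0; rewrite eq_q coefMXn.
  case: ifP => [_ | k0 _]; first by rewrite eqxx.
  suff k_eq0 : `|m' - m|%N = 0%N by rewrite k_eq0 expr0 mulr1; split=> //; lia.
  by move: k0; rewrite lt0n => /negbFE/eqP.
case: r r' => m q [m' q'] [/= -> q0] [/= eq_a q'0].
have [le_mm' | /ltW le_m'm] := lerP m m'.
  by have [-> ->] := uniq_le _ _ _ _ le_mm' q0 eq_a.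
by have [-> ->] := uniq_le _ _ _ _ le_m'm q'0 (esym eq_a).
Qed.

Lemma lrep_eq a r : lrep_spec a r -> lrep a = r.
Proof.
move=> ar; rewrite /lrep; case: pselect => [ex | []]; last by exists r.
by case: (cid ex) => r' ar' /=; apply: lrep_spec_uniq ar' ar.
Qed.

Lemma lrep_XnM m (k : nat) q : q`_0 != 0 ->
  lrep (LX p ^ m * lfrac (q * 'X^k)) = (m + k%:Z, q).
Proof. by move=> q0; apply: lrep_eq; rewrite /lrep_spec LXzDn_lfrac. Qed.

Lemma degm_nf m q : q`_0 != 0 -> degm (LX p ^ m * lfrac q) = m.
Proof. by move=> q0; rewrite /degm (lrep_eq (_ : lrep_spec _ (m, q))). Qed.

Lemma degm_ge m q : q != 0 -> m <= degm (LX p ^ m * lfrac q).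
Proof.
by case/poly_split_Xn=> k [q' [-> q'0]]; rewrite /degm lrep_XnM //= lerDl.
Qed.

Lemma degp_rep m q : q != 0 -> degp (LX p ^ m * lfrac q) = m + (size q).-1.
Proof.
case/poly_split_Xn=> k [q' [-> q'0]].
have q'_neq0 := coef0_neq0 q'0.
rewrite /degp lrep_XnM //= size_mulXn //.
by rewrite -size_poly_eq0 in q'_neq0; case: (size q') q'_neq0 => // s _; rewrite addnS /=; lia.
Qed.

Lemma lrep_specP a : laurent a -> a != 0 -> lrep_spec a (lrep a).
Proof.
case=> m [q ->] a0; have q0 : q != 0.
  by apply: contraNneq a0 => ->; rewrite /lfrac tofrac0 mulr0.
have [k [q' [-> q'0]]] := poly_split_Xn q0.
by rewrite lrep_XnM //; split; rewrite //= LXzDn_lfrac.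
Qed.

Lemma laurent0 : laurent (0 : LF p).
Proof. by exists 0, 0; rewrite /lfrac tofrac0 mulr0. Qed.

Lemma laurent1 : laurent (1 : LF p).
Proof. by exists 0, 1; rewrite /lfrac tofrac1 expr0z mulr1. Qed.

Lemma laurentN a : laurent a -> laurent (- a).
Proof. by case=> m [q ->]; exists m, (- q); rewrite /lfrac tofracN mulrN. Qed.

Lemma laurentM a b : laurent a -> laurent b -> laurent (a * b).
Proof.
case=> m [q ->] [m' [q' ->]]; exists (m + m'), (q * q').
by rewrite expfzDr ?LX_neq0 // lfracM mulrACA.
Qed.

Lemma laurentD a b : laurent a -> laurent b -> laurent (a + b).
Proof.
case=> m [q ->] [m' [q' ->]].
wlog le_mm' : m m' q q' / m <= m'.
  by move=> sym; have [/sym // | /ltW/sym] := lerP m m'; rewrite addrC.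
by exists m, (q + q' * 'X^`|m' - m|%N); rewrite (laurent_rebase q' le_mm') -mulrDr -lfracD.
Qed.

Lemma lrep_specM a b : laurent a -> laurent b -> a != 0 -> b != 0 ->
  lrep_spec (a * b) (degm a + degm b, (lrep a).2 * (lrep b).2).
Proof.
move=> La Lb a0 b0; have [Ea qa0] := lrep_specP La a0; have [Eb qb0] := lrep_specP Lb b0.
split; last by rewrite coef0M mulf_neq0.
by rewrite {1}Ea {1}Eb expfzDr ?LX_neq0 // lfracM mulrACA.
Qed.

Lemma degmM a b : laurent a -> laurent b -> a != 0 -> b != 0 ->
  degm (a * b) = degm a + degm b.
Proof. by move=> La Lb a0 b0; rewrite {1}/degm (lrep_eq (lrep_specM La Lb a0 b0)). Qed.

Lemma degpM a b : laurent a -> laurent b -> a != 0 -> b != 0 ->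
  degp (a * b) = degp a + degp b.
Proof.
move=> La Lb a0 b0; rewrite {1}/degp (lrep_eq (lrep_specM La Lb a0 b0)) /=.
have [_ /coef0_neq0 qa0] := lrep_specP La a0; have [_ /coef0_neq0 qb0] := lrep_specP Lb b0.
rewrite size_mul // /degp /degm; move: qa0 qb0; rewrite -!size_poly_eq0.
by case: (size (lrep a).2) => // sa _; case: (size (lrep b).2) => // sb _; lia.
Qed.

Lemma laurent_common_rep a b : laurent a -> laurent b -> a != 0 -> b != 0 ->
  exists m qa qb, [/\ m = Num.min (degm a) (degm b),
    a = LX p ^ m * lfrac qa, b = LX p ^ m * lfrac qb, qa != 0 & qb != 0].
Proof.
move=> La Lb a0 b0; have [Ea /coef0_neq0 qa0] := lrep_specP La a0.
have [Eb /coef0_neq0 qb0] := lrep_specP Lb b0.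
have ma : Num.min (degm a) (degm b) <= degm a by rewrite ge_min lexx.
have mb : Num.min (degm a) (degm b) <= degm b by rewrite ge_min lexx orbT.
exists (Num.min (degm a) (degm b)), ((lrep a).2 * 'X^`|degm a - Num.min (degm a) (degm b)|%N),
  ((lrep b).2 * 'X^`|degm b - Num.min (degm a) (degm b)|%N).
split=> //; rewrite -?laurent_rebase //.
all: by rewrite mulf_neq0 // monic_neq0 // monicXn.
Qed.

Lemma degpD a b : laurent a -> laurent b -> a != 0 -> b != 0 -> a + b != 0 ->
  degp (a + b) <= Num.max (degp a) (degp b).
Proof.
move=> La Lb a0 b0 ab0; have [m [qa [qb [_ Ea Eb qa0 qb0]]]] := laurent_common_rep La Lb a0 b0.
have Eab : a + b = LX p ^ m * lfrac (qa + qb) by rewrite Ea Eb lfracD mulrDr.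
have qab0 : qa + qb != 0 by apply: contraNneq ab0 => qab0; rewrite Eab qab0 /lfrac tofrac0 mulr0.
rewrite Eab Ea Eb !degp_rep //; have := size_polyD qa qb.
by rewrite -size_poly_eq0 in qa0 qb0 qab0; lia.
Qed.

Lemma degmD a b : laurent a -> laurent b -> a != 0 -> b != 0 -> a + b != 0 ->
  Num.min (degm a) (degm b) <= degm (a + b).
Proof.
move=> La Lb a0 b0 ab0; have [m [qa [qb [<- Ea Eb qa0 qb0]]]] := laurent_common_rep La Lb a0 b0.
have Eab : a + b = LX p ^ m * lfrac (qa + qb) by rewrite Ea Eb lfracD mulrDr.
have qab0 : qa + qb != 0 by apply: contraNneq ab0 => qab0; rewrite Eab qab0 /lfrac tofrac0 mulr0.
by rewrite Eab degm_ge.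
Qed.

Lemma LX0_lfrac1 : 1 = LX p ^ 0 * lfrac 1.
Proof. by rewrite expr0z mul1r /lfrac tofrac1. Qed.

Lemma degp1 : degp (1 : LF p) = 0.
Proof. by rewrite LX0_lfrac1 degp_rep ?oner_neq0 // size_poly1. Qed.

Lemma degm1 : degm (1 : LF p) = 0.
Proof. by rewrite LX0_lfrac1 degm_nf // coef1. Qed.

Lemma ultra_degree_degp : ultra_degree (@laurent p) (@degp p).
Proof.
split; [exact: laurent0 | exact: laurent1 | exact: laurentN | exact: laurentD
       | exact: laurentM | exact: degp1 | exact: degpM | exact: degpD].
Qed.

Lemma ultra_degree_degm : ultra_degree (@laurent p) (fun a => - degm a).
Proof.
have NdegmM a b : laurent a -> laurent b -> a != 0 -> b != 0 ->
    - degm (a * b) = - degm a + - degm b.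
  by move=> La Lb a0 b0; rewrite degmM // opprD.
have NdegmD a b : laurent a -> laurent b -> a != 0 -> b != 0 -> a + b != 0 ->
    - degm (a + b) <= Num.max (- degm a) (- degm b).
  by move=> La Lb a0 b0 ab0; rewrite -oppr_min lerN2 degmD.
split; [exact: laurent0 | exact: laurent1 | exact: laurentN | exact: laurentD
       | exact: laurentM | by rewrite degm1 oppr0 | exact: NdegmM | exact: NdegmD].
Qed.

End Laurent.

Lemma monic_coef_lt (K : idomainType) (d : K -> int) (P : {poly K}) :
  P \is monic -> (1 < size P)%N -> d 1 = 0 ->
  (forall k, (0 < k)%N -> P`_k != 0 -> d P`_k < d P`_0) <->
  0 < d P`_0 /\ (forall k, (1 <= k < (size P).-1)%N -> P`_k != 0 -> d P`_k < d P`_0).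
Proof.
move=> Pmonic Psize d1; set n := (size P).-1.
have Pn : P`_n = 1 by move/monicP: Pmonic; rewrite lead_coefE.
have n_gt0 : (0 < n)%N by rewrite /n; lia.
have coef_gt k : (n < k)%N -> P`_k = 0.
  by move=> nk; apply: nth_default; rewrite -(ltn_predK Psize).
split=> [lt_d | [d0_gt0 lt_d] k k_gt0 Pk].
  split=> [|k /andP[k_gt0 _]]; last exact: lt_d.
  by rewrite -d1 -Pn; apply: lt_d; rewrite ?Pn ?oner_neq0.
have [k_lt_n | k_gt_n | ->] := ltngtP k n.
- by apply: lt_d => //; apply/andP.
- by move: Pk; rewrite coef_gt ?eqxx.
- by rewrite Pn d1.
Qed.

Lemma expansive_dominant p (P : {poly LF p}) : P \is monic -> (1 < size P)%N ->
  expansive P <->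
  dominant_index (@degp p) P 0 /\ dominant_index (fun a => - degm a) P 0.
Proof.
move=> Pmonic Psize; rewrite !dominant_index0P.
have [dp_lt dp_gt] := monic_coef_lt Pmonic Psize (degp1 p).
have Ndegm1 : - degm (1 : LF p) = 0 by rewrite degm1 oppr0.
have [dm_lt dm_gt] := monic_coef_lt (d := fun a => - degm a) Pmonic Psize Ndegm1.
split=> [[_ _ P0 dp [dm_lt0 dm_gt0]] | [[P0 /dp_lt dp] [_ /dm_lt[dm_gt0 dm]]]].
  split; split=> //; first exact: dp_gt.
  apply: dm_gt; split=> [|k kn Pk]; first by rewrite oppr_gt0.
  by rewrite ltrN2; apply: dm_gt0.
split=> //; first by rewrite -subn1 subn_gt0.
split; first by rewrite -oppr_gt0.
by move=> k kn Pk; rewrite -ltrN2; apply: dm.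
Qed.

Theorem lemma1 (p : nat) (pi rho tau : {poly LF p}) :
  prime p ->
  laurent_poly pi -> laurent_poly rho -> laurent_poly tau ->
  pi \is monic -> rho \is monic -> tau \is monic ->
  (1 < size pi)%N -> (1 < size rho)%N -> (1 < size tau)%N ->
  pi = rho * tau ->
  (expansive pi <-> expansive rho /\ expansive tau).
Proof.
move=> _ _ Lrho Ltau pi_monic rho_monic tau_monic pi_size rho_size tau_size pi_eq.
have rho0 := monic_neq0 rho_monic; have tau0 := monic_neq0 tau_monic.
have [dp_to dp_of] := dominant_index0M (ultra_degree_degp p) Lrho Ltau rho0 tau0.
have [dm_to dm_of] := dominant_index0M (ultra_degree_degm p) Lrho Ltau rho0 tau0.
rewrite (expansive_dominant pi_monic pi_size) (expansive_dominant rho_monic rho_size).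
rewrite (expansive_dominant tau_monic tau_size) pi_eq.
split=> [[/dp_to[dpr dpt] /dm_to[dmr dmt]] | [[dpr dmr] [dpt dmt]]].
  exact: conj (conj dpr dmr) (conj dpt dmt).
exact: conj (dp_of (conj dpr dpt)) (dm_of (conj dmr dmt)).
Qed.
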